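(* Let $\mathfrak{G}$ be a topologically Noetherian profinite group. Then every minimal equicontinuous continuous action $\widehat{\Phi}\colon\mathfrak{G}\times\mathfrak{X}\to\mathfrak{X}$ of $\mathfrak{G}$ on a Cantor space $\mathfrak{X}$ is locally quasi-analytic.
   Context: A profinite group is topologically Noetherian if every increasing chain of closed subgroups has a maximal element. An action of a group $G$ by homeomorphisms on a metric Cantor space $\mathfrak{X}$ is locally quasi-analytic if there exists $\varepsilon>0$ such that for every nonempty open $U\subset\mathfrak{X}$ with $\mathrm{diam}(U)<\varepsilon$, every nonempty open $V\subset U$, and all $g_1,g_2\in G$: if the actions of $g_1$ and $g_2$ agree on $V$, then they agree on $U$. Minimal means every orbit is dense. *)

From HB Require Import structures.
From mathcomp Require Import all_boot all_order all_algebra.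
From mathcomp Require Import all_classical all_reals all_analysis.
Set Implicit Arguments. Unset Strict Implicit. Unset Printing Implicit Defensive.
Import Order.TTheory GRing.Theory Num.Theory.
Local Open Scope classical_set_scope.
Local Open Scope ring_scope.

Definition is_group (G : Type) (mul : G -> G -> G) (inv : G -> G) (e : G) :=
  [/\ associative mul, left_id e mul & left_inverse e inv mul].

Definition is_topological_group (G : topologicalType)
    (mul : G -> G -> G) (inv : G -> G) (e : G) :=
  [/\ is_group mul inv e,
      continuous (fun p : G * G => mul p.1 p.2) & continuous inv].

Definition profinite_group (G : topologicalType)
    (mul : G -> G -> G) (inv : G -> G) (e : G) :=
  [/\ is_topological_group mul inv e, compact [set: G],
      hausdorff_space G & totally_disconnected [set: G]].

Definition closed_subgroup (G : topologicalType)
    (mul : G -> G -> G) (inv : G -> G) (e : G) (H : set G) :=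
  [/\ closed H, H e & forall x y, H x -> H y -> H (mul x (inv y))].

Definition topologically_noetherian (G : topologicalType)
    (mul : G -> G -> G) (inv : G -> G) (e : G) :=
  forall H : nat -> set G,
    (forall n, closed_subgroup mul inv e (H n)) ->
    (forall n, H n `<=` H n.+1) ->
    exists n, forall m, H m `<=` H n.

Definition is_metric (R : realType) (X : Type) (d : X -> X -> R) :=
  [/\ forall x y, 0 <= d x y,
      forall x y, d x y = 0 <-> x = y,
      forall x y, d x y = d y x &
      forall x y z, d x z <= d x y + d y z].

Definition metric_compatible (R : realType) (X : topologicalType)
    (d : X -> X -> R) :=
  forall A : set X, open A <->
    (forall x, A x -> exists2 r, 0 < r & [set y | d x y < r] `<=` A).

Definition metric_cantor_space (R : realType) (X : topologicalType)
    (d : X -> X -> R) :=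
  [/\ is_metric d, metric_compatible d, cantor_like X & [set: X] !=set0].

Definition diam (R : realType) (X : Type) (d : X -> X -> R) (U : set X)
  : \bar R := ereal_sup [set (d p.1 p.2)%:E | p in U `*` U].

Definition group_action (G X : Type) (mul : G -> G -> G) (e : G)
    (act : G -> X -> X) :=
  (forall x, act e x = x) /\
  (forall g h x, act (mul g h) x = act g (act h x)).

Definition continuous_action (G X : topologicalType) (act : G -> X -> X) :=
  continuous (fun p : G * X => act p.1 p.2).

Definition minimal_action (G : Type) (X : topologicalType)
    (act : G -> X -> X) :=
  forall x : X, dense (range (fun g => act g x)).

Definition equicontinuous_action (R : realType) (G X : Type)
    (d : X -> X -> R) (act : G -> X -> X) :=
  forall eps, 0 < eps -> exists2 delta, 0 < delta &
    forall x y, d x y < delta -> forall g, d (act g x) (act g y) < eps.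

Definition locally_quasi_analytic (R : realType) (G : Type)
    (X : topologicalType) (d : X -> X -> R) (act : G -> X -> X) :=
  exists2 eps : R, 0 < eps &
    forall U : set X, open U -> U !=set0 -> (diam d U < eps%:E)%E ->
    forall V : set X, open V -> V !=set0 -> V `<=` U ->
    forall g1 g2 : G, (forall x, V x -> act g1 x = act g2 x) ->
      forall x, U x -> act g1 x = act g2 x.

From HB Require Import structures.
From mathcomp Require Import all_boot all_order all_algebra.
From mathcomp Require Import all_classical all_reals all_analysis.
Set Implicit Arguments. Unset Strict Implicit. Unset Printing Implicit Defensive.
Import Order.TTheory GRing.Theory Num.Theory.
Local Open Scope classical_set_scope.
Local Open Scope ring_scope.

(* For a set A of points let K(A) be its
   fixator, the closed subgroup of elements fixing A pointwise.  Fix a base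
   point x0 and the balls B_n of radius 1/(n+1) around x0: the fixators
   K(B_0) <= K(B_1) <= ... form an increasing chain of closed subgroups,
   which stabilises at some index N by the Noetherian hypothesis.  Let eps be
   the equicontinuity modulus for 1/(N+1).  Since a compact group acting
   minimally on a Hausdorff space acts transitively, any element h fixing a
   nonempty open set V can be conjugated by some g with g x0 in V into an
   element fixing a small ball B_m, hence fixing B_N; transporting back, h
   fixes every point at distance < eps from V.  Applied to h = g2^-1 g1 this
   gives local quasi-analyticity with constant eps. *)

Section GroupIdentities.
Variables (G : Type) (mul : G -> G -> G) (inv : G -> G) (e : G).
Hypothesis grp : is_group mul inv e.

Lemma group_mulV (g : G) : mul g (inv g) = e.
Proof.
case: grp => mA m1 mV.
rewrite -[mul g _]m1 -{1}(mV (inv g)) -mA (mA (inv g)) mV m1.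
exact: mV.
Qed.

Lemma group_mulKV (g x : G) : mul g (mul (inv g) x) = x.
Proof. by case: grp => mA m1 _; rewrite mA group_mulV m1. Qed.

End GroupIdentities.

Section ActionIdentities.
Variables (G X : Type) (mul : G -> G -> G) (inv : G -> G) (e : G).
Variable act : G -> X -> X.
Hypotheses (grp : is_group mul inv e) (action : group_action mul e act).

Lemma act_invK (g : G) (x : X) : act (inv g) (act g x) = x.
Proof. by case: action => ae amul; case: grp => _ _ mV; rewrite -amul mV ae. Qed.

Lemma act_Kinv (g : G) (x : X) : act g (act (inv g) x) = x.
Proof. by case: action => ae amul; rewrite -amul (group_mulV grp) ae. Qed.

Definition fixator (A : set X) : set G := [set g | forall x, A x -> act g x = x].

Lemma fixator_antitone (A B : set X) : A `<=` B -> fixator B `<=` fixator A.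
Proof. by move=> AB g Bg x /AB; apply: Bg. Qed.

Lemma agree_fixator (A : set X) (g1 g2 : G) :
  (forall x, A x -> act g1 x = act g2 x) -> fixator A (mul (inv g2) g1).
Proof.
case: action => _ amul agree x Ax.
by rewrite amul agree // act_invK.
Qed.

Lemma fixator_conj (A B : set X) (g h : G) :
  (forall x, B x -> A (act g x)) -> fixator A h ->
  fixator B (mul (inv g) (mul h g)).
Proof.
case: action => _ amul gBA hA x Bx.
by rewrite amul amul hA ?act_invK //; apply: gBA.
Qed.

End ActionIdentities.

Section TopologicalActions.
Variables (G X : topologicalType) (mul : G -> G -> G) (inv : G -> G) (e : G).
Variable act : G -> X -> X.
Hypotheses (grp : is_group mul inv e) (action : group_action mul e act).
Hypothesis cact : continuous_action act.

Lemma orbit_map_continuous (x : X) : continuous (fun g => act g x).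
Proof.
move=> g.
apply: (@continuous2_cvg _ G X X (nbhs g) _ id (fun _ => x) act g x).
- exact: (@cact (g, x)).
- exact: cvg_id.
- exact: cvg_cst.
Qed.

Lemma fixator_closed_subgroup (A : set X) :
  hausdorff_space X -> closed_subgroup mul inv e (fixator act A).
Proof.
move=> hX; case: action => ae amul; split.
- have -> : fixator act A = \bigcap_(x in A) ((fun g => act g x) @^-1` [set x]).
    by apply/seteqP; split => g /= H x Ax; apply: H.
  apply: closed_bigI => x _.
  move/continuous_closedP: (@orbit_map_continuous x); apply.
  exact: accessible_closed_set1 (hausdorff_accessible hX) x.
- by move=> x _; rewrite ae.
- move=> a b Ka Kb x Ax.
  by rewrite amul -{1}(Kb x Ax) (act_invK grp action) Ka.
Qed.

(* A minimal action of a compact group on a Hausdorff space is transitive: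
   each orbit is compact, hence closed, and dense. *)
Lemma minimal_compact_transitive : compact [set: G] -> hausdorff_space X ->
  minimal_action act -> forall x y : X, exists g, act g x = y.
Proof.
move=> cptG hX mini x y; apply: contrapT => ny.
have orbit_closed : closed (range (fun g => act g x)).
  apply: compact_closed => //; apply: continuous_compact => //.
  exact/continuous_subspaceT/orbit_map_continuous.
case: (mini x (~` range (fun g => act g x))).
- by exists y => -[g _ gy]; apply: ny; exists g.
- by rewrite openC.
- by move=> z [].
Qed.

End TopologicalActions.

Section MetricActions.
Variables (R : realType) (G X : topologicalType).
Variables (mul : G -> G -> G) (inv : G -> G) (e : G).
Variables (d : X -> X -> R) (act : G -> X -> X).
Hypotheses (grp : is_group mul inv e) (action : group_action mul e act).

Definition dball (x : X) (r : R) : set X := [set y | d x y < r].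

Lemma fixator_balls_stabilise (x0 : X) :
  topologically_noetherian mul inv e ->
  (forall A, closed_subgroup mul inv e (fixator act A)) ->
  exists N, forall m, fixator act (dball x0 m.+1%:R^-1)
                        `<=` fixator act (dball x0 N.+1%:R^-1).
Proof.
move=> noeth Ksub; apply: noeth => // n.
apply: fixator_antitone => x Bx; apply: (lt_le_trans Bx).
by rewrite lef_pV2 ?posrE // ler_nat.
Qed.

Lemma fixator_open_spreads (x0 : X) (N : nat) (eps : R) :
  metric_compatible d -> equicontinuous_action d act ->
  (forall y, exists g, act g x0 = y) ->
  (forall m, fixator act (dball x0 m.+1%:R^-1)
               `<=` fixator act (dball x0 N.+1%:R^-1)) ->
  (forall x y, d x y < eps -> forall g, d (act g x) (act g y) < N.+1%:R^-1) ->
  forall (V : set X) (h : G), open V -> fixator act V h ->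
  forall y u, V y -> d y u < eps -> act h u = u.
Proof.
move=> dcomp eqc trans stab Heps V h oV hV y u Vy yu.
have [r r0 ballV] := (dcomp V).1 oV y Vy.
have [del del0 Hdel] := eqc _ r0.
have [m] := ltr_add_invr del0; rewrite add0r => Hm.
have [g gy] := trans y.
pose k := mul (inv g) (mul h g).
have small_ball_in_V : forall z, dball x0 m.+1%:R^-1 z -> V (act g z).
  move=> z Bz; apply: ballV; rewrite /= -gy.
  exact/Hdel/(lt_trans Bz Hm).
have kN : fixator act (dball x0 N.+1%:R^-1) k.
  exact/stab/(fixator_conj grp action small_ball_in_V hV).
have near_x0 : dball x0 N.+1%:R^-1 (act (inv g) u).
  by have := Heps _ _ yu (inv g); rewrite -gy (act_invK grp action).
have hg : mul h g = mul g k by rewrite /k (group_mulKV grp).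
have [_ amul] := action.
by rewrite -{1}(act_Kinv grp action g u) -amul hg amul kN ?(act_Kinv grp action).
Qed.

End MetricActions.

Theorem proposition3p4 (R : realType) (G : topologicalType)
  (mul : G -> G -> G) (inv : G -> G) (e : G) :
  profinite_group mul inv e ->
  topologically_noetherian mul inv e ->
  forall (X : topologicalType) (d : X -> X -> R) (act : G -> X -> X),
    metric_cantor_space d ->
    group_action mul e act ->
    continuous_action act ->
    minimal_action act ->
    equicontinuous_action d act ->
    locally_quasi_analytic d act.
Proof.
move=> [[grp _ _] cptG _ _] noeth X d act
  [_ dcomp [_ _ hX _] [x0 _]] action cact mini eqc.
have trans := minimal_compact_transitive cact cptG hX mini x0.
have [N stab] := fixator_balls_stabilise d x0 noeth
  (fun A => fixator_closed_subgroup grp action cact A hX).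
have [eps eps0 Heps] := eqc N.+1%:R^-1 ltac:(by rewrite invr_gt0).
exists eps => // U _ _ dU V oV [y Vy] VU g1 g2 agree u Uu.
have yu : d y u < eps.
  rewrite -lte_fin; apply: le_lt_trans dU.
  by apply: ereal_sup_ubound; exists (y, u) => //; split => //; apply: VU.
have hu := fixator_open_spreads grp action dcomp eqc trans stab Heps oV
  (agree_fixator grp action agree) Vy yu.
case: action => _ amul.
by rewrite -[in LHS](group_mulKV grp g2 g1) amul hu.
Qed.
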